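(* Let $X$ be a closure-stable weakly u-II-compatible ub-space. Then $X$ is proper if and only if it is Cauchy complete and preproper. Moreover, every such proper space is locally compact.
   Context: An ub-space is a set $X$ with uniformity $\mathcal{U}_X$ and bornology $\mathcal{B}_X$ (cover closed under subsets and finite unions); topological notions refer to the induced topology. Closure-stable: the closure of every bounded set is bounded. Proper: every bounded closed set is compact. Preproper: every bounded set is precompact. II-compatible: each point has a bounded neighbourhood. Weakly u-II-compatible: $X$ is a subspace (uniform subspace with bornology $\{B\cap X:B\in\mathcal{B}_{\bar X}\}$) of some Cauchy complete II-compatible ub-space $\bar X$. *)

From Stdlib Require Import List Classical.
Set Implicit Arguments.

Record is_uniformity (X : Type) (U : (X -> X -> Prop) -> Prop) : Prop := {
  unif_full : U (fun _ _ => True);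
  unif_up : forall E F : X -> X -> Prop, U E -> (forall x y, E x y -> F x y) -> U F;
  unif_inter : forall E F, U E -> U F -> U (fun x y => E x y /\ F x y);
  unif_diag : forall E, U E -> forall x, E x x;
  unif_sym : forall E, U E -> U (fun x y => E y x);
  unif_comp : forall E, U E -> exists D, U D /\ forall x y z, D x y -> D y z -> E x z
}.

Record is_bornology (X : Type) (B : (X -> Prop) -> Prop) : Prop := {
  born_cover : forall x, exists A, B A /\ A x;
  born_sub : forall A A' : X -> Prop, B A -> (forall x, A' x -> A x) -> B A';
  born_union : forall A A', B A -> B A' -> B (fun x => A x \/ A' x)
}.

Record ubspace : Type := UBSpace {
  carrier :> Type;
  unif : (carrier -> carrier -> Prop) -> Prop;
  born : (carrier -> Prop) -> Prop;
  unif_ax : is_uniformity unif;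
  born_ax : is_bornology born
}.

Section UB.
Variable X : ubspace.

Definition bounded (A : X -> Prop) : Prop := born X A.

Definition nbhd (x : X) (N : X -> Prop) : Prop :=
  exists E, unif X E /\ forall y, E x y -> N y.

Definition is_open (A : X -> Prop) : Prop := forall x, A x -> nbhd x A.

Definition closure (A : X -> Prop) : X -> Prop :=
  fun x => forall N, nbhd x N -> exists y, N y /\ A y.

Definition is_closed (A : X -> Prop) : Prop := forall x, closure A x -> A x.

Definition compact (K : X -> Prop) : Prop :=
  forall (I : Type) (O : I -> X -> Prop),
    (forall i, is_open (O i)) ->
    (forall x, K x -> exists i, O i x) ->
    exists l : list I, forall x, K x -> exists i, In i l /\ O i x.

Definition precompact (A : X -> Prop) : Prop :=
  forall E, unif X E ->
    exists l : list X, (forall a, In a l -> A a) /\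
      forall x, A x -> exists a, In a l /\ E a x.

Definition is_filter (F : (X -> Prop) -> Prop) : Prop :=
  F (fun _ => True) /\ ~ F (fun _ => False) /\
  (forall S T : X -> Prop, F S -> (forall x, S x -> T x) -> F T) /\
  (forall S T, F S -> F T -> F (fun x => S x /\ T x)).

Definition cauchy_filter (F : (X -> Prop) -> Prop) : Prop :=
  is_filter F /\
  forall E, unif X E -> exists S, F S /\ forall x y, S x -> S y -> E x y.

Definition filter_converges (F : (X -> Prop) -> Prop) (x : X) : Prop :=
  forall N, nbhd x N -> F N.

Definition cauchy_complete : Prop :=
  forall F, cauchy_filter F -> exists x, filter_converges F x.

Definition closure_stable : Prop :=
  forall A, bounded A -> bounded (closure A).

Definition proper : Prop :=
  forall A, bounded A -> is_closed A -> compact A.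

Definition preproper : Prop :=
  forall A, bounded A -> precompact A.

Definition II_compatible : Prop :=
  forall x, exists N, nbhd x N /\ bounded N.

Definition locally_compact : Prop :=
  forall x, exists K, nbhd x K /\ compact K.

End UB.

Definition ub_subspace (X Y : ubspace) (i : X -> Y) : Prop :=
  (forall a b, i a = i b -> a = b) /\
  (forall E : X -> X -> Prop,
     unif X E <-> exists E', unif Y E' /\ forall a b, E a b <-> E' (i a) (i b)) /\
  (forall A : X -> Prop,
     born X A <-> exists A', born Y A' /\ forall a, A a <-> A' (i a)).

Definition weakly_u_II_compatible (X : ubspace) : Prop :=
  exists (Y : ubspace) (i : X -> Y),
    cauchy_complete Y /\ II_compatible Y /\ ub_subspace X Y i.

(* A proper space is preproper because the closure of a bounded set is compact,
   hence totally bounded; it is Cauchy complete because a Cauchy filter of X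
   converges in the complete ambient space, so it contains the trace of a bounded
   neighbourhood of the limit, whose closure in X is compact and forces a
   cluster point.  Conversely, given an open cover of a bounded closed set A with
   no finite subcover, Zorn's lemma yields a maximal filter none of whose members
   is finitely covered on A; total boundedness of A makes it Cauchy,
   completeness makes it converge, and the limit lies in A and in some member of
   the cover, which is absurd.  Local compactness follows from bounded
   neighbourhoods having compact closures. *)

From Stdlib Require Import List Classical.
From mathcomp Require classical_sets.

Arguments nbhd {X} x N.
Arguments is_open {X} A.
Arguments closure {X} A _.
Arguments is_closed {X} A.
Arguments compact {X} K.
Arguments precompact {X} A.
Arguments is_filter {X} F.
Arguments cauchy_filter {X} F.
Arguments filter_converges {X} F x.
Arguments bounded {X} A.

Section UniformBasics.
Variable X : ubspace.

Lemma unif_symmetric_half (E : X -> X -> Prop) : unif X E ->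
  exists D, unif X D /\ (forall x y, D x y -> D y x) /\
    (forall x y z, D x y -> D y z -> E x z).
Proof.
  intros hE. destruct (unif_comp (unif_ax X) E hE) as [D [hD hc]].
  exists (fun x y => D x y /\ D y x). split; [|split].
  - exact (unif_inter (unif_ax X) _ _ hD (unif_sym (unif_ax X) _ hD)).
  - intros x y [a b]; split; assumption.
  - intros x y z [a _] [b _]; eauto.
Qed.

Lemma entourage_nbhd (E : X -> X -> Prop) (x : X) : unif X E -> nbhd x (E x).
Proof. intros hE; exists E; split; auto. Qed.

Lemma nbhd_mem (x : X) (N : X -> Prop) : nbhd x N -> N x.
Proof. intros [E [hE hN]]; apply hN, (unif_diag (unif_ax X) E hE). Qed.

Lemma interior_open (N : X -> Prop) : is_open (fun z => nbhd z N).
Proof.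
  intros z [E [hE hN]]. destruct (unif_comp (unif_ax X) E hE) as [D [hD hc]].
  exists D; split; auto. intros w hw. exists D; split; auto.
  intros v hv. apply hN. eapply hc; eauto.
Qed.

Lemma closure_closed (A : X -> Prop) : is_closed (closure A).
Proof.
  intros x hx N [E [hE hN]]. destruct (unif_comp (unif_ax X) E hE) as [D [hD hc]].
  destruct (hx (D x) (entourage_nbhd D x hD)) as [y [hxy hy]].
  destruct (hy (D y) (entourage_nbhd D y hD)) as [z [hyz hz]].
  exists z; split; [apply hN; eapply hc; eauto | exact hz].
Qed.

Lemma subset_closure (A : X -> Prop) (x : X) : A x -> closure A x.
Proof. intros h N hN; exists x; split; [apply nbhd_mem, hN | exact h]. Qed.

End UniformBasics.

Section ClusterPoints.
Variable X : ubspace.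

Definition cluster_point (F : (X -> Prop) -> Prop) (x : X) : Prop :=
  forall N S, nbhd x N -> F S -> exists y, N y /\ S y.

Lemma filter_nonempty (F : (X -> Prop) -> Prop) (S : X -> Prop) :
  is_filter F -> F S -> exists x, S x.
Proof.
  intros [_ [hF [hup _]]] hS. apply NNPP; intros hn. apply hF.
  apply hup with S; [exact hS|]. intros x hx; apply hn; exists x; exact hx.
Qed.

Lemma filter_forall_list (A : Type) (F : (X -> Prop) -> Prop)
  (T : A -> X -> Prop) (l : list A) :
  is_filter F -> (forall a, In a l -> F (T a)) ->
  F (fun x => forall a, In a l -> T a x).
Proof.
  intros [hT [_ [hup hint]]]. induction l as [|a l IH]; intros hl.
  - apply hup with (fun _ => True); [exact hT | intros x _ b []].
  - apply hup with (fun x => T a x /\ forall b, In b l -> T b x).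
    + apply hint; [apply hl; left; reflexivity | apply IH; intros b hb; apply hl; right; exact hb].
    + intros x [h1 h2] b [<- | hb]; auto.
Qed.

Lemma cauchy_cluster_converges (F : (X -> Prop) -> Prop) (x : X) :
  cauchy_filter F -> cluster_point F x -> filter_converges F x.
Proof.
  intros [[_ [_ [hup _]]] hc] hx N [E [hE hN]].
  destruct (unif_comp (unif_ax X) E hE) as [D [hD hDc]].
  destruct (hc D hD) as [S [hS hsmall]].
  destruct (hx (D x) S (entourage_nbhd X D x hD) hS) as [w [hxw hw]].
  apply hup with S; [exact hS|]. intros z hz. apply hN. apply hDc with w; auto.
Qed.

(* The interiors of the complements of the members of [F] cover [K] unless [F]
   clusters somewhere; a finite subcover contradicts [F] being a filter. *)
Lemma compact_cluster_point (F : (X -> Prop) -> Prop) (K S0 : X -> Prop) :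
  is_filter F -> compact K -> F S0 -> (forall x, S0 x -> K x) ->
  exists x, cluster_point F x.
Proof.
  intros HF HK hS0 hS0K. apply NNPP; intros hn.
  destruct (HK {T : X -> Prop | F T} (fun T z => nbhd z (fun y => ~ proj1_sig T y)))
    as [l hl].
  - intros T; apply interior_open.
  - intros x _. apply NNPP; intros hx. apply hn; exists x.
    intros N S hN hS. apply NNPP; intros hNS. apply hx.
    exists (exist _ S hS); simpl.
    destruct hN as [E [hE hN]]. exists E; split; [exact hE|].
    intros y hy hSy. apply hNS; exists y; split; auto.
  - assert (hfin : F (fun x => forall T, In T l -> proj1_sig T x))
      by (apply filter_forall_list; [exact HF | intros T _; exact (proj2_sig T)]).
    destruct (filter_nonempty F _ HF (proj2 (proj2 (proj2 HF)) _ _ hS0 hfin))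
      as [w [hw hwl]].
    destruct (hl w (hS0K w hw)) as [T [hT hwT]].
    exact (nbhd_mem X _ _ hwT (hwl T hT)).
Qed.

End ClusterPoints.

Arguments cluster_point {X} F x.

Lemma proper_preproper (X : ubspace) : closure_stable X -> proper X -> preproper X.
Proof.
  intros Hcs Hp A hA E hE.
  destruct (unif_symmetric_half X E hE) as [D [hD [hsym hc]]].
  assert (HK : compact (closure A)) by (apply Hp; [apply Hcs; exact hA | apply closure_closed]).
  destruct (HK {a : X | A a} (fun a z => nbhd z (E (proj1_sig a)))) as [l hl].
  - intros a; apply interior_open.
  - intros x hx. destruct (hx (D x) (entourage_nbhd X D x hD)) as [a [hxa ha]].
    exists (exist _ a ha). exists D; split; [exact hD|].
    intros y hy. apply hc with x; [apply hsym; exact hxa | exact hy].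
  - exists (map (@proj1_sig _ _) l). split.
    + intros a ha. apply in_map_iff in ha. destruct ha as [p [<- _]]. exact (proj2_sig p).
    + intros x hx. destruct (hl x (subset_closure X A x hx)) as [p [hp hxp]].
      exists (proj1_sig p). split; [apply in_map; exact hp | exact (nbhd_mem X _ _ hxp)].
Qed.

Lemma proper_cauchy_converges (X : ubspace) (F : (X -> Prop) -> Prop) (S : X -> Prop) :
  closure_stable X -> proper X -> cauchy_filter F -> F S -> bounded S ->
  exists x, filter_converges F x.
Proof.
  intros Hcs Hp HF hS hSb.
  destruct (compact_cluster_point X F (closure S) S (proj1 HF)) as [x hx].
  - apply Hp; [apply Hcs; exact hSb | apply closure_closed].
  - exact hS.
  - apply subset_closure.
  - exists x; apply cauchy_cluster_converges; assumption.
Qed.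

Section AvoidingFilters.
Context {T : Type} (I : (T -> Prop) -> Prop).
Hypothesis I_empty : I (fun _ => False).
Hypothesis I_sub : forall S S', I S -> (forall x, S' x -> S x) -> I S'.
Hypothesis I_union : forall S S', I S -> I S' -> I (fun x => S x \/ S' x).

Definition avoiding_filter (F : (T -> Prop) -> Prop) : Prop :=
  (forall S S', F S -> (forall x, S x -> S' x) -> F S') /\
  (forall S S', F S -> F S' -> F (fun x => S x /\ S' x)) /\
  (forall S, F S -> ~ I S).

Definition maximal_avoiding_filter (F : (T -> Prop) -> Prop) : Prop :=
  avoiding_filter F /\
  forall G, avoiding_filter G -> (forall S, F S -> G S) -> forall S, G S -> F S.

Lemma avoiding_filter_chain_union (C : ((T -> Prop) -> Prop) -> Prop) :
  (forall F, C F -> avoiding_filter F) ->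
  (forall F G, C F -> C G -> (forall S, F S -> G S) \/ (forall S, G S -> F S)) ->
  avoiding_filter (fun S => exists2 F, C F & F S).
Proof.
  intros HC Htot. split; [|split].
  - intros S S' [F hF hS] hSS'. exists F; [exact hF | exact (proj1 (HC F hF) S S' hS hSS')].
  - intros S S' [F hF hS] [G hG hS'].
    destruct (Htot F G hF hG) as [h | h].
    + exists G; [exact hG | apply (HC G hG); auto].
    + exists F; [exact hF | apply (HC F hF); auto].
  - intros S [F hF hS]. exact (proj2 (proj2 (HC F hF)) S hS).
Qed.

Lemma maximal_avoiding_filter_exists :
  ~ I (fun _ => True) ->
  exists F, maximal_avoiding_filter F /\ F (fun _ => True).
Proof.
  intros Htop.
  destruct (@classical_sets.Zorn_bigcup _ avoiding_filter) as [F [HF Hmax]].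
  { intros C HC Htot. apply avoiding_filter_chain_union; [exact HC|].
    intros G H hG hH. exact (Htot G H hG hH). }
  assert (Fmax : forall G, avoiding_filter G -> (forall S, F S -> G S) ->
                 forall S, G S -> F S).
  { intros G HG hFG. apply NNPP; intros hGF. apply (Hmax G); [split | exact HG].
    - exact hFG.
    - intros hsub. apply hGF; exact hsub. }
  exists F. split; [split; assumption|].
  (* [F] could a priori be empty; adjoining the whole space rules this out. *)
  apply (Fmax (fun S => F S \/ forall x, S x)); [split; [|split] | |].
  - intros S S' [hS | hS] hSS'; [left; exact (proj1 HF S S' hS hSS') | right; auto].
  - intros S S' [hS | hS] [hS' | hS'].
    + left; apply HF; assumption.
    + left; apply (proj1 HF) with S; [exact hS | intros x hx; split; auto].
    + left; apply (proj1 HF) with S'; [exact hS' | intros x hx; split; auto].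
    + right; intros x; split; auto.
  - intros S [hS | hS] hIS; [exact (proj2 (proj2 HF) S hS hIS) | ].
    apply Htop, I_sub with S; [exact hIS | intros x _; apply hS].
  - intros S hS; left; exact hS.
  - right; trivial.
Qed.

Section Maximal.
Variable F : (T -> Prop) -> Prop.
Hypothesis HF : maximal_avoiding_filter F.
Hypothesis F_top : F (fun _ => True).

Lemma maximal_avoiding_filter_adjoin (S0 : T -> Prop) :
  (forall S, F S -> ~ I (fun x => S x /\ S0 x)) -> F S0.
Proof.
  intros hS0. destruct HF as [[_ [Fint _]] Fmax].
  apply (Fmax (fun U => exists2 S, F S & forall x, S x -> S0 x -> U x)).
  - split; [|split].
    + intros U U' [S hS hU] hUU'. exists S; auto.
    + intros U U' [S hS hU] [S' hS' hU']. exists (fun x => S x /\ S' x).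
      * apply Fint; assumption.
      * intros x [h h'] h0; split; auto.
    + intros U [S hS hU] hIU. apply (hS0 S hS).
      apply I_sub with U; [exact hIU | intros x [h h0]; auto].
  - intros S hS. exists S; auto.
  - exists (fun _ => True); auto.
Qed.

Lemma maximal_avoiding_filter_compl (S0 : T -> Prop) :
  ~ F S0 -> F (fun x => ~ S0 x).
Proof.
  intros hnS0. destruct HF as [[_ [Fint Favoid]] _].
  apply maximal_avoiding_filter_adjoin. intros S hS hI. apply hnS0.
  apply maximal_avoiding_filter_adjoin. intros S' hS' hI'.
  apply (Favoid _ (Fint S S' hS hS')).
  apply I_sub with (fun x => (S' x /\ S0 x) \/ (S x /\ ~ S0 x)).
  - apply I_union; assumption.
  - intros x [h h']. destruct (classic (S0 x)); [left | right]; auto.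
Qed.

Lemma maximal_avoiding_filter_list_cover (S : T -> Prop) (l : list (T -> Prop)) :
  F S -> (forall x, S x -> exists2 U, In U l & U x) -> exists2 U, In U l & F U.
Proof.
  destruct HF as [[Fup [Fint Favoid]] _].
  revert S. induction l as [|U l IH]; intros S hS hcov.
  - exfalso. apply (Favoid S hS), I_sub with (fun _ => False); [exact I_empty|].
    intros x hx. destruct (hcov x hx) as [U []].
  - destruct (classic (F U)) as [hU | hnU]; [exists U; [left|]; auto|].
    destruct (IH (fun x => S x /\ ~ U x)) as [V hV hFV].
    + apply Fint; [exact hS | apply maximal_avoiding_filter_compl; exact hnU].
    + intros x [hx hnx]. destruct (hcov x hx) as [V [<- | hV] hVx];
        [contradiction | exists V; assumption].
    + exists V; [right|]; assumption.
Qed.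

End Maximal.

End AvoidingFilters.

Section CompleteCompact.
Variable X : ubspace.

Lemma maximal_avoiding_filter_cauchy (I : (X -> Prop) -> Prop) (F : (X -> Prop) -> Prop)
  (A : X -> Prop) :
  I (fun _ => False) ->
  (forall S S', I S -> (forall x, S' x -> S x) -> I S') ->
  (forall S S', I S -> I S' -> I (fun x => S x \/ S' x)) ->
  maximal_avoiding_filter I F -> precompact A -> F A -> cauchy_filter F.
Proof.
  intros I_empty I_sub I_union HF hA hFA.
  pose proof HF as [[Fup [Fint Favoid]] _].
  assert (F_top : F (fun _ => True)) by (apply Fup with A; auto).
  split; [split; [exact F_top | split; [|split; assumption]]|].
  - intros hF. exact (Favoid _ hF I_empty).
  - intros E hE. destruct (unif_symmetric_half X E hE) as [D [hD [hsym hc]]].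
    destruct (hA D hD) as [la [_ hla]].
    destruct (maximal_avoiding_filter_list_cover I I_empty I_sub I_union F HF F_top A
                (map D la) hFA) as [U hU hFU].
    + intros x hx. destruct (hla x hx) as [a [ha hax]].
      exists (D a); [apply in_map; exact ha | exact hax].
    + apply in_map_iff in hU. destruct hU as [a [<- _]].
      exists (D a). split; [exact hFU|].
      intros x y hx hy. apply hc with a; [apply hsym; exact hx | exact hy].
Qed.

Definition finitely_covered {J : Type} (O : J -> X -> Prop) (A S : X -> Prop) : Prop :=
  exists l : list J, forall x, A x -> S x -> exists j, In j l /\ O j x.

Lemma finitely_covered_empty (J : Type) (O : J -> X -> Prop) (A : X -> Prop) :
  finitely_covered O A (fun _ => False).
Proof. exists nil; intros x _ []. Qed.

Lemma finitely_covered_sub (J : Type) (O : J -> X -> Prop) (A S S' : X -> Prop) :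
  finitely_covered O A S -> (forall x, S' x -> S x) -> finitely_covered O A S'.
Proof. intros [l hl] hS'. exists l; auto. Qed.

Lemma finitely_covered_union (J : Type) (O : J -> X -> Prop) (A S S' : X -> Prop) :
  finitely_covered O A S -> finitely_covered O A S' ->
  finitely_covered O A (fun x => S x \/ S' x).
Proof.
  intros [l hl] [l' hl']. exists (l ++ l'). intros x hx [hS | hS'].
  - destruct (hl x hx hS) as [j [hj hxj]]. exists j; split; [apply in_or_app; left|]; auto.
  - destruct (hl' x hx hS') as [j [hj hxj]]. exists j; split; [apply in_or_app; right|]; auto.
Qed.

Lemma complete_precompact_closed_compact (A : X -> Prop) :
  cauchy_complete X -> precompact A -> is_closed A -> compact A.
Proof.
  intros Hc hA hAcl J O hO hcov. apply NNPP; intros hnfin.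
  set (I := finitely_covered O A).
  pose proof (finitely_covered_empty J O A) as I_empty.
  pose proof (finitely_covered_sub J O A) as I_sub.
  pose proof (finitely_covered_union J O A) as I_union.
  destruct (maximal_avoiding_filter_exists I I_sub) as [F [HF F_top]].
  { intros [l hl]. apply hnfin. exists l; auto. }
  pose proof HF as [[Fup [Fint Favoid]] _].
  assert (hFA : F A).
  { apply (maximal_avoiding_filter_adjoin I I_sub F HF F_top).
    intros S hS [l hl]. apply (Favoid S hS). exists l. intros x hx hSx. apply hl; auto. }
  destruct (Hc F (maximal_avoiding_filter_cauchy I F A I_empty I_sub I_union HF hA hFA))
    as [x hx].
  assert (hxA : A x).
  { apply hAcl. intros N hN. apply NNPP; intros hNA.
    apply (Favoid _ (Fint N A (hx N hN) hFA)), I_sub with (fun _ => False); [exact I_empty|].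
    intros y hy. apply hNA; exists y; exact hy. }
  destruct (hcov x hxA) as [j hxj].
  apply (Favoid (O j) (hx (O j) (hO j x hxj))).
  exists (j :: nil). intros y _ hy. exists j; split; [left|]; auto.
Qed.

End CompleteCompact.

Section Subspace.
Variables (X Y : ubspace) (i : X -> Y).
Hypothesis Hi : ub_subspace X Y i.

Lemma subspace_unif_trace (E : Y -> Y -> Prop) : unif Y E -> unif X (fun a b => E (i a) (i b)).
Proof.
  intros hE. apply (proj1 (proj2 Hi)). exists E; split; [exact hE | intros a b; split; auto].
Qed.

Lemma subspace_bounded_trace (B : Y -> Prop) : bounded B -> bounded (fun a => B (i a)).
Proof.
  intros hB. apply (proj2 (proj2 Hi)). exists B; split; [exact hB | intros a; split; auto].
Qed.

Lemma subspace_nbhd_trace (x : X) (N : Y -> Prop) : nbhd (i x) N -> nbhd x (fun a => N (i a)).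
Proof.
  intros [E [hE hN]]. exists (fun a b => E (i a) (i b)).
  split; [apply subspace_unif_trace; exact hE | intros y hy; apply hN, hy].
Qed.

Lemma subspace_image_cauchy (F : (X -> Prop) -> Prop) :
  cauchy_filter F -> cauchy_filter (fun T => F (fun a => T (i a))).
Proof.
  intros [[hT [hF [hup hint]]] hc]. split; [split; [exact hT | split; [exact hF | split]]|].
  - intros S T hS hST. apply hup with (fun a => S (i a)); [exact hS | intros a; apply hST].
  - intros S T hS hT'. exact (hint _ _ hS hT').
  - intros E hE. destruct (hc _ (subspace_unif_trace E hE)) as [S [hS hsmall]].
    exists (fun y => exists a, S a /\ y = i a). split.
    + apply hup with S; [exact hS | intros a ha; exists a; auto].
    + intros y1 y2 [a1 [h1 ->]] [a2 [h2 ->]]. apply hsmall; auto.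
Qed.

End Subspace.

Lemma weakly_u_II_compatible_II_compatible (X : ubspace) :
  weakly_u_II_compatible X -> II_compatible X.
Proof.
  intros [Y [i [_ [HY Hi]]]] x. destruct (HY (i x)) as [N [hN hNb]].
  exists (fun a => N (i a)). split.
  - apply (subspace_nbhd_trace X Y i Hi); exact hN.
  - apply (subspace_bounded_trace X Y i Hi); exact hNb.
Qed.

Lemma proper_locally_compact (X : ubspace) :
  closure_stable X -> II_compatible X -> proper X -> locally_compact X.
Proof.
  intros Hcs HII Hp x. destruct (HII x) as [N [hN hNb]].
  exists (closure N). split.
  - destruct hN as [E [hE hN]]. exists E; split; [exact hE|].
    intros y hy; apply subset_closure, hN, hy.
  - apply Hp; [apply Hcs; exact hNb | apply closure_closed].
Qed.

Lemma proper_cauchy_complete (X : ubspace) :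
  closure_stable X -> weakly_u_II_compatible X -> proper X -> cauchy_complete X.
Proof.
  intros Hcs [Y [i [HYc [HY Hi]]]] Hp F HF.
  destruct (HYc _ (subspace_image_cauchy X Y i Hi F HF)) as [y hy].
  destruct (HY y) as [N [hN hNb]].
  apply (proper_cauchy_converges X F (fun a => N (i a)) Hcs Hp HF).
  - exact (hy N hN).
  - apply (subspace_bounded_trace X Y i Hi); exact hNb.
Qed.

Theorem mainTheorem8 (X : ubspace) :
  closure_stable X -> weakly_u_II_compatible X ->
  (proper X <-> cauchy_complete X /\ preproper X) /\
  (proper X -> locally_compact X).
Proof.
  intros Hcs Hw. split; [split|].
  - intros Hp. split; [apply proper_cauchy_complete | apply proper_preproper]; assumption.
  - intros [Hc Hpp] A hA hAcl.
    apply complete_precompact_closed_compact; [exact Hc | apply Hpp; exact hA | exact hAcl].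
  - apply proper_locally_compact;
      [exact Hcs | apply weakly_u_II_compatible_II_compatible; exact Hw].
Qed.
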